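(* Let $0<s<r<1$ and let $P$ be a compact packing of the plane by discs of radii $1,r,s$. If some $s$-disc of $P$ has a corona whose coding $w$ is one of 1rss, 11rss, 1rrss, 1srss, then $P$ contains an $s$-disc whose corona coding is neither $w$ nor ssssss.
   Context: A packing is a set of discs in the plane with pairwise disjoint interiors; it is compact if its contact graph (centers as vertices, edges between tangent discs) is a triangulation of the plane. An $x$-disc is a disc of radius $x$. The corona of a disc $D$ is the set of discs tangent to $D$; its coding is the cyclic word over $\{1,r,s\}$ listing the radii of these discs in angular order around $D$ (consecutive letters correspond to tangent discs), considered up to rotation and reversal. *)

From Stdlib Require Import Reals List.
Import ListNotations.
Open Scope R_scope.

Record Disc := mkDisc { cx : R; cy : R; rad : R }.

Definition dist2 (D E : Disc) : R :=
  (cx D - cx E) ^ 2 + (cy D - cy E) ^ 2.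

Definition tangent (D E : Disc) : Prop :=
  D <> E /\ dist2 D E = (rad D + rad E) ^ 2.

Definition packing (P : Disc -> Prop) : Prop :=
  (forall D, P D -> 0 < rad D) /\
  (forall D E, P D -> P E -> D <> E -> (rad D + rad E) ^ 2 <= dist2 D E).

Definition cross (D U V : Disc) : R :=
  (cx U - cx D) * (cy V - cy D) - (cy U - cy D) * (cx V - cx D).

(** Seen from the center of D, the direction of W lies strictly inside the
    counterclockwise angular sector going from the direction of U to that of V. *)
Definition strictly_between_ccw (D U W V : Disc) : Prop :=
  if Rlt_dec 0 (cross D U V)
  then 0 < cross D U W /\ 0 < cross D W V
  else 0 < cross D U W \/ 0 < cross D W V.

Definition default_disc : Disc := mkDisc 0 0 0.

Definition cyc_pair (L : list Disc) (i : nat) : Disc * Disc :=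
  (nth i L default_disc, nth (S i mod length L)%nat L default_disc).

(** L lists the corona of D in P (the discs of P tangent to D), without
    repetition, in counterclockwise angular order around D. *)
Definition ccw_corona (P : Disc -> Prop) (D : Disc) (L : list Disc) : Prop :=
  NoDup L /\
  (forall X, In X L <-> (P X /\ tangent D X)) /\
  (forall i X, (i < length L)%nat -> In X L ->
     ~ strictly_between_ccw D (fst (cyc_pair L i)) X (snd (cyc_pair L i))).

(** Compactness: the contact graph is a triangulation of the plane, expressed
    vertex-wise: around every disc D, any two angularly consecutive discs of
    the corona are tangent to each other and form with D a triangle whose
    angle at D is the (convex, < pi) sector between them; i.e. the faces
    incident to every vertex are all triangles and surround it. *)
Definition compact_packing (P : Disc -> Prop) : Prop :=
  forall D, P D ->
    exists L, ccw_corona P D L /\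
      forall i, (i < length L)%nat ->
        tangent (fst (cyc_pair L i)) (snd (cyc_pair L i)) /\
        0 < cross D (fst (cyc_pair L i)) (snd (cyc_pair L i)).

Inductive Letter := L1 | Lr | Ls.

Definition lval (r s : R) (l : Letter) : R :=
  match l with L1 => 1 | Lr => r | Ls => s end.

Definition rotation {A} (u v : list A) : Prop :=
  exists a b, u = a ++ b /\ v = b ++ a.

Definition cyc_equiv {A} (u v : list A) : Prop :=
  rotation u v \/ rotation u (rev v).

Definition has_coding (r s : R) (P : Disc -> Prop) (D : Disc) (w : list Letter)
  : Prop :=
  exists L w', ccw_corona P D L /\
    Forall2 (fun X l => rad X = lval r s l) L w' /\ cyc_equiv w' w.

From Stdlib Require Import Reals Lra Psatz List Lia Bool Classical.
Import ListNotations.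
Open Scope R_scope.

(** Let [D0] be an [s]-disc whose corona has one of the special codings [w].
    Each special word contains exactly one cyclic factor [x s s y], namely
    [r s s 1] read in one of the two orientations; so the corona of [D0]
    contains consecutive neighbours [X P1 Q Y] with [P1], [Q] of radius [s]
    and [{rad X, rad Y} = {r, 1}].  Neither [P1] nor [Q] has coding [ssssss].
    If both had coding [w], then, since [s] is the smallest radius, the
    triangles [D0 P1 Q], [D0 X P1], [D0 Q Y] are faces around [P1] and [Q];
    the frame of the corona of [P1] forces the disc [U] preceding [Q] there to
    have radius [rad Y], and the frame of [Q] forces the disc [V] following
    [P1] to have radius [rad X].  But [U] and [V] both close the gap beyond the
    segment [P1 Q], which (by the monotonicity of angles in the radius of a
    disc touching two tangent discs) forces [rad U = rad V]: contradiction. *)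

Definition dot (D U V : Disc) : R :=
  (cx U - cx D) * (cx V - cx D) + (cy U - cy D) * (cy V - cy D).

Lemma dist2_dot D U V : dist2 U V = dot D U U + dot D V V - 2 * dot D U V.
Proof. unfold dist2, dot; ring. Qed.

Lemma tangent_dot D U : tangent D U -> dot D U U = (rad D + rad U) ^ 2.
Proof. intros [_ H]. rewrite <- H. unfold dist2, dot; ring. Qed.

Lemma tangent_sym U V : tangent U V -> tangent V U.
Proof.
  intros [Hne H]; split; [congruence|].
  unfold dist2 in *. rewrite Rplus_comm with (r1 := rad V), <- H. ring.
Qed.

Lemma cross_cyc A B C : cross A B C = cross B C A.
Proof. unfold cross; ring. Qed.

Lemma cross_swap D U V : cross D U V = - cross D V U.
Proof. unfold cross; ring. Qed.

Lemma cross_self D U : cross D U U = 0.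
Proof. unfold cross; ring. Qed.

Lemma same_ray D U A B La Lb :
  0 < La -> 0 < Lb -> La ^ 2 = dot D A A -> Lb ^ 2 = dot D B B ->
  cross D A B = 0 -> cross D U A * cross D U B > 0 ->
  La * (cx B - cx D) = Lb * (cx A - cx D) /\ La * (cy B - cy D) = Lb * (cy A - cy D).
Proof.
  unfold dot, cross; intros HLa HLb Ea Eb Hab Hu.
  set (a1 := cx A - cx D) in *. set (a2 := cy A - cy D) in *.
  set (b1 := cx B - cx D) in *. set (b2 := cy B - cy D) in *.
  set (u1 := cx U - cx D) in *. set (u2 := cy U - cy D) in *.
  assert (Hdot_pos : a1 * b1 + a2 * b2 > 0).
  { assert (Hid : (a1 * a1 + a2 * a2) * ((u1 * a2 - u2 * a1) * (u1 * b2 - u2 * b1)) =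
                  (a1 * b1 + a2 * b2) * (u1 * a2 - u2 * a1) ^ 2
                  + (u1 * a1 + u2 * a2) * (u1 * a2 - u2 * a1) * (a1 * b2 - a2 * b1)) by ring.
    rewrite Hab, Rmult_0_r, Rplus_0_r in Hid.
    assert (Hl : (a1 * a1 + a2 * a2) * ((u1 * a2 - u2 * a1) * (u1 * b2 - u2 * b1)) > 0).
    { apply Rmult_lt_0_compat; [nra | exact Hu]. }
    rewrite Hid in Hl.
    destruct (Rle_or_lt (a1 * b1 + a2 * b2) 0) as [h|h]; [|exact h].
    assert (0 <= (u1 * a2 - u2 * a1) ^ 2) by apply pow2_ge_0. nra. }
  assert (Hlagrange : (a1 * b1 + a2 * b2) ^ 2 + (a1 * b2 - a2 * b1) ^ 2 =
                      (a1 * a1 + a2 * a2) * (b1 * b1 + b2 * b2)) by ring.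
  rewrite Hab, <- Ea, <- Eb in Hlagrange.
  assert (Hdot : a1 * b1 + a2 * b2 = La * Lb).
  { assert (La * Lb > 0) by nra. nra. }
  assert (Hzero : (La * b1 - Lb * a1) ^ 2 + (La * b2 - Lb * a2) ^ 2 = 0).
  { transitivity (La ^ 2 * (b1 * b1 + b2 * b2) + Lb ^ 2 * (a1 * a1 + a2 * a2)
                  - 2 * (La * Lb) * (a1 * b1 + a2 * b2)); [ring|].
    rewrite <- Ea, <- Eb, Hdot. ring. }
  pose proof (pow2_ge_0 (La * b1 - Lb * a1)). pose proof (pow2_ge_0 (La * b2 - Lb * a2)).
  assert (Z1 : (La * b1 - Lb * a1) ^ 2 = 0) by lra.
  assert (Z2 : (La * b2 - Lb * a2) ^ 2 = 0) by lra.
  rewrite <- Rsqr_pow2 in Z1, Z2. apply Rsqr_eq_0 in Z1. apply Rsqr_eq_0 in Z2. lra.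
Qed.

Lemma same_ray_dot D U A B Z La Lb :
  0 < La -> 0 < Lb -> La ^ 2 = dot D A A -> Lb ^ 2 = dot D B B ->
  cross D A B = 0 -> cross D U A * cross D U B > 0 ->
  dot D B Z * La = dot D A Z * Lb.
Proof.
  intros HLa HLb Ea Eb Hab Hu.
  destruct (same_ray D U A B La Lb HLa HLb Ea Eb Hab Hu) as [E1 E2].
  unfold dot.
  transitivity ((La * (cx B - cx D)) * (cx Z - cx D) + (La * (cy B - cy D)) * (cy Z - cy D));
    [ring|].
  rewrite E1, E2. ring.
Qed.

Lemma same_direction_eq (P : Disc -> Prop) C A B E :
  packing P -> 0 < rad C -> P B -> P E -> tangent C B -> tangent C E ->
  cross C B E = 0 -> cross C A B * cross C A E > 0 -> B = E.
Proof.
  intros [Hpos Hdisj] HC HB HE TB TE Hbe Ha.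
  apply NNPP; intro Hne.
  pose proof (Hdisj B E HB HE Hne) as Hd.
  pose proof (Hpos B HB). pose proof (Hpos E HE).
  pose proof (tangent_dot C B TB) as EB. pose proof (tangent_dot C E TE) as EE.
  assert (Hdot : dot C E B * (rad C + rad B) = dot C B B * (rad C + rad E)).
  { apply (same_ray_dot C A B E B); try lra; auto. }
  assert (Hdot_sym : dot C B E = dot C E B) by (unfold dot; ring).
  assert (Hbe_dot : dot C E B = (rad C + rad B) * (rad C + rad E)).
  { rewrite EB in Hdot. apply Rmult_eq_reg_r with (rad C + rad B); [nra | lra]. }
  rewrite (dist2_dot C), EB, EE in Hd. nra.
Qed.

(** The proof decomposes [z] along
    the bisector [s] of the two unit vectors and the orthogonal vector [d]. *)
Lemma cos_between D Y W Z Ly Lw :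
  0 < Ly -> 0 < Lw -> Ly ^ 2 = dot D Y Y -> Lw ^ 2 = dot D W W ->
  cross D Y W > 0 -> cross D W Z > 0 -> cross D Y Z > 0 ->
  dot D W Z * Ly > dot D Y Z * Lw.
Proof.
  unfold dot, cross; intros HLy HLw Ey Ew Hyw Hwz Hyz.
  set (y1 := cx Y - cx D) in *. set (y2 := cy Y - cy D) in *.
  set (w1 := cx W - cx D) in *. set (w2 := cy W - cy D) in *.
  set (z1 := cx Z - cx D) in *. set (z2 := cy Z - cy D) in *.
  set (s1 := Ly * w1 + Lw * y1). set (s2 := Ly * w2 + Lw * y2).
  set (d1 := Ly * w1 - Lw * y1). set (d2 := Ly * w2 - Lw * y2).
  assert (Horth : d1 * s1 + d2 * s2 = 0).
  { unfold d1, s1, d2, s2.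
    transitivity (Ly ^ 2 * (w1 * w1 + w2 * w2) - Lw ^ 2 * (y1 * y1 + y2 * y2)); [ring|].
    rewrite Ey, Ew. ring. }
  assert (Hdecomp : (s1 ^ 2 + s2 ^ 2) * (d1 * z1 + d2 * z2) =
     (d1 * s1 + d2 * s2) * (s1 * z1 + s2 * z2) + (s1 * d2 - s2 * d1) * (s1 * z2 - s2 * z1))
    by ring.
  assert (Hsign : (s1 * d2 - s2 * d1) * (s1 * z2 - s2 * z1) =
     2 * ((Lw * Ly * (y1 * w2 - y2 * w1)) *
          (Ly * (w1 * z2 - w2 * z1) + Lw * (y1 * z2 - y2 * z1)))).
  { unfold s1, s2, d1, d2. ring. }
  rewrite Horth, Hsign in Hdecomp.
  assert (Hpos : (s1 ^ 2 + s2 ^ 2) * (d1 * z1 + d2 * z2) > 0).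
  { rewrite Hdecomp.
    assert (Lw * Ly * (y1 * w2 - y2 * w1) > 0) by (apply Rmult_lt_0_compat; nra).
    assert (Ly * (w1 * z2 - w2 * z1) + Lw * (y1 * z2 - y2 * z1) > 0) by nra.
    nra. }
  assert (Hdz : d1 * z1 + d2 * z2 > 0).
  { destruct (Rle_or_lt (d1 * z1 + d2 * z2) 0) as [h|h]; [|exact h].
    assert (0 <= s1 ^ 2 + s2 ^ 2) by nra. nra. }
  unfold d1, d2 in Hdz. nra.
Qed.

Definition mirror (D : Disc) : Disc := mkDisc (cx D) (- cy D) (rad D).

Lemma mirror_involutive D : mirror (mirror D) = D.
Proof. destruct D; unfold mirror; simpl; f_equal; ring. Qed.

Lemma cross_mirror D U V : cross (mirror D) (mirror U) (mirror V) = - cross D U V.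
Proof. unfold cross, mirror; simpl; ring. Qed.

Lemma dist2_mirror U V : dist2 (mirror U) (mirror V) = dist2 U V.
Proof. unfold dist2, mirror; simpl; ring. Qed.

Lemma tangent_mirror U V : tangent U V -> tangent (mirror U) (mirror V).
Proof.
  intros [Hne H]; split.
  - intro E. apply Hne. rewrite <- (mirror_involutive U), E. apply mirror_involutive.
  - rewrite dist2_mirror. exact H.
Qed.

Lemma no_cusp_disc C Y Z W :
  0 < rad C -> rad Y = rad C -> 0 < rad Z -> rad C <= rad W ->
  tangent C Y -> tangent C Z -> tangent Y Z -> tangent C W ->
  (rad W + rad Z) ^ 2 <= dist2 W Z ->
  ~ (cross C Y W > 0 /\ cross C W Z > 0 /\ cross C Y Z > 0).
Proof.
  intros HC HY HZ HW TY TZ TYZ TW Hd (h1 & h2 & h3).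
  pose proof (tangent_dot C Y TY) as EY. pose proof (tangent_dot C Z TZ) as EZ.
  pose proof (tangent_dot C W TW) as EW.
  destruct TYZ as [_ DYZ]. rewrite (dist2_dot C) in DYZ, Hd.
  assert (HYZ : dot C Y Z = 2 * rad C ^ 2) by (rewrite HY in *; nra).
  pose proof (cos_between C Y W Z (rad C + rad Y) (rad C + rad W) ltac:(lra) ltac:(lra)
    (eq_sym EY) (eq_sym EW) h1 h2 h3) as K.
  rewrite HYZ, HY in K.
  assert (HWZ : 2 * dot C W Z <= (rad C + rad W) ^ 2 + (rad C + rad Z) ^ 2 - (rad W + rad Z) ^ 2)
    by lra.
  clear - K HWZ HC HZ HW.
  assert (rad C * (2 * dot C W Z) <=
          rad C * ((rad C + rad W) ^ 2 + (rad C + rad Z) ^ 2 - (rad W + rad Z) ^ 2))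
    by (apply Rmult_le_compat_l; lra).
  assert (rad C * rad Z * (rad W - rad C) >= 0) by (apply Rle_ge; apply Rmult_le_pos; nra).
  nra.
Qed.

Lemma no_cusp_disc_cw C Y Z W :
  0 < rad C -> rad Y = rad C -> 0 < rad Z -> rad C <= rad W ->
  tangent C Y -> tangent C Z -> tangent Y Z -> tangent C W ->
  (rad W + rad Z) ^ 2 <= dist2 W Z ->
  ~ (cross C Z W > 0 /\ cross C W Y > 0 /\ cross C Z Y > 0).
Proof.
  intros HC HY HZ HW TY TZ TYZ TW Hd (h1 & h2 & h3).
  apply (no_cusp_disc (mirror C) (mirror Y) (mirror Z) (mirror W)); simpl; auto;
    try apply tangent_mirror; auto.
  - rewrite dist2_mirror; exact Hd.
  - rewrite !cross_mirror, (cross_swap C Y W), (cross_swap C W Z), (cross_swap C Y Z). lra.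
Qed.

Lemma cos_tangent_decreasing C Z A B :
  0 < rad C -> 0 < rad Z ->
  tangent C Z -> tangent C A -> tangent C B -> tangent A Z -> tangent B Z ->
  rad B < rad A -> dot C B Z * (rad C + rad A) > dot C A Z * (rad C + rad B).
Proof.
  intros HC HZ TZ TA TB TAZ TBZ Hlt.
  pose proof (tangent_dot C Z TZ). pose proof (tangent_dot C A TA).
  pose proof (tangent_dot C B TB).
  destruct TAZ as [_ DA]. destruct TBZ as [_ DB].
  rewrite (dist2_dot C) in DA, DB.
  assert (EA : dot C A Z = ((rad C + rad A) ^ 2 + (rad C + rad Z) ^ 2 - (rad A + rad Z) ^ 2) / 2)
    by lra.
  assert (EB : dot C B Z = ((rad C + rad B) ^ 2 + (rad C + rad Z) ^ 2 - (rad B + rad Z) ^ 2) / 2)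
    by lra.
  rewrite EA, EB. clear - HC HZ Hlt.
  assert (rad C * rad Z * (rad A - rad B) > 0)
    by (apply Rmult_lt_0_compat; [apply Rmult_lt_0_compat|]; lra).
  match goal with |- ?l > ?r => assert (l - r = 2 * (rad C * rad Z * (rad A - rad B))) by field end.
  lra.
Qed.

Lemma smaller_disc_closer C Z A B :
  0 < rad C -> 0 < rad Z -> 0 < rad A -> 0 < rad B ->
  tangent C Z -> tangent C A -> tangent C B -> tangent A Z -> tangent B Z ->
  cross C A Z > 0 -> cross C B Z > 0 -> rad B < rad A -> cross C A B > 0.
Proof.
  intros HC HZ HA HB TZ TA TB TAZ TBZ h1 h2 Hlt.
  pose proof (cos_tangent_decreasing C Z A B HC HZ TZ TA TB TAZ TBZ Hlt) as K.
  pose proof (tangent_dot C A TA) as EA. pose proof (tangent_dot C B TB) as EB.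
  destruct (Rtotal_order (cross C A B) 0) as [h|[h|h]]; [exfalso|exfalso|exact h].
  - assert (h' : cross C B A > 0) by (rewrite cross_swap; lra).
    pose proof (cos_between C B A Z (rad C + rad B) (rad C + rad A) ltac:(lra) ltac:(lra)
      (eq_sym EB) (eq_sym EA) h' h1 h2). lra.
  - assert (cross C Z A * cross C Z B > 0)
      by (rewrite (cross_swap C Z A), (cross_swap C Z B); nra).
    pose proof (same_ray_dot C Z A B Z (rad C + rad A) (rad C + rad B) ltac:(lra) ltac:(lra)
      (eq_sym EA) (eq_sym EB) h H). lra.
Qed.

Lemma smaller_disc_closer_cw C Z A B :
  0 < rad C -> 0 < rad Z -> 0 < rad A -> 0 < rad B ->
  tangent C Z -> tangent C A -> tangent C B -> tangent A Z -> tangent B Z ->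
  cross C Z A > 0 -> cross C Z B > 0 -> rad A < rad B -> cross C A B > 0.
Proof.
  intros HC HZ HA HB TZ TA TB TAZ TBZ h1 h2 Hlt.
  assert (K : cross (mirror C) (mirror B) (mirror A) > 0).
  { apply (smaller_disc_closer (mirror C) (mirror Z)); simpl; auto; try apply tangent_mirror;
      auto; rewrite cross_mirror, cross_swap; lra. }
  rewrite cross_mirror, cross_swap in K. lra.
Qed.

Definition next_in (L : list Disc) (A B : Disc) : Prop :=
  exists i, (i < length L)%nat /\ cyc_pair L i = (A, B).

Lemma next_in_In L A B : next_in L A B -> In A L /\ In B L.
Proof.
  intros (i & Hi & E). unfold cyc_pair in E. injection E as <- <-.
  split; apply nth_In; [exact Hi | apply Nat.mod_upper_bound; lia].
Qed.

Lemma next_exists L A : In A L -> exists B, next_in L A B.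
Proof.
  intros HA. destruct (In_nth L A default_disc HA) as (i & Hi & E).
  exists (nth (S i mod length L) L default_disc), i. unfold cyc_pair. rewrite E. auto.
Qed.

Lemma prev_exists L B : In B L -> exists A, next_in L A B.
Proof.
  intros HB. destruct (In_nth L B default_disc HB) as (k & Hk & E).
  destruct k as [|j].
  - exists (nth (length L - 1) L default_disc), (length L - 1)%nat.
    split; [lia|]. unfold cyc_pair. replace (S (length L - 1)) with (length L) by lia.
    rewrite Nat.Div0.mod_same, E. reflexivity.
  - exists (nth j L default_disc), j. split; [lia|].
    unfold cyc_pair. rewrite Nat.mod_small, E by lia. reflexivity.
Qed.

Section Coronas.

Variable P : Disc -> Prop.
Hypothesis packP : packing P.
Hypothesis compactP : compact_packing P.

Lemma corona_In C L X : ccw_corona P C L -> In X L <-> P X /\ tangent C X.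
Proof. intros (_ & H & _). apply H. Qed.

Lemma corona_transfer C L L' X : ccw_corona P C L -> ccw_corona P C L' -> In X L -> In X L'.
Proof. intros HL HL' HX. apply (corona_In C L' X HL'), (corona_In C L X HL), HX. Qed.

Lemma next_in_corona C L A B :
  ccw_corona P C L -> next_in L A B -> (P A /\ tangent C A) /\ (P B /\ tangent C B).
Proof.
  intros HL HAB. destruct (next_in_In L A B HAB) as [HA HB].
  split; apply (corona_In C L _ HL); assumption.
Qed.

Lemma corona_gap C L A B X :
  ccw_corona P C L -> next_in L A B -> cross C A B > 0 -> In X L ->
  ~ (cross C A X > 0 /\ cross C X B > 0).
Proof.
  intros (_ & _ & Hgap) (i & Hi & E) HAB HX.
  specialize (Hgap i X Hi HX). rewrite E in Hgap. simpl in Hgap.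
  unfold strictly_between_ccw in Hgap. destruct (Rlt_dec 0 (cross C A B)); [exact Hgap | lra].
Qed.

(** Consecutive members of any ccw corona are tangent and form a convex
    angle; compactness provides this for one ccw listing, and two ccw
    listings of the same corona have the same successor function. *)
Lemma corona_next C L A B :
  P C -> ccw_corona P C L -> next_in L A B -> tangent A B /\ cross C A B > 0.
Proof.
  intros HC HL HAB.
  destruct (compactP C HC) as (Lc & HLc & Hfaces).
  destruct (next_in_In L A B HAB) as [HA HB].
  assert (HAc : In A Lc) by (apply (corona_transfer C L Lc); auto).
  destruct (next_exists Lc A HAc) as (B' & HAB').
  assert (HABc : tangent A B' /\ cross C A B' > 0).
  { destruct HAB' as (j & Hj & E). specialize (Hfaces j Hj). rewrite E in Hfaces. exact Hfaces. }
  destruct HABc as [TAB' CAB'].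
  destruct (next_in_In Lc A B' HAB') as [_ HB'c].
  assert (HB' : In B' L) by (apply (corona_transfer C Lc L); auto).
  assert (HBc : In B Lc) by (apply (corona_transfer C L Lc); auto).
  assert (CAB : cross C A B > 0).
  { destruct HL as (_ & _ & Hgap). destruct HAB as (i & Hi & E).
    specialize (Hgap i B' Hi HB'). rewrite E in Hgap. simpl in Hgap.
    unfold strictly_between_ccw in Hgap.
    destruct (Rlt_dec 0 (cross C A B)); [lra | tauto]. }
  pose proof (corona_gap C L A B B' HL HAB CAB HB') as G1.
  pose proof (corona_gap C Lc A B' B HLc HAB' CAB' HBc) as G2.
  assert (E : B = B').
  { apply (corona_In C L B HL) in HB as [PB TB]. apply (corona_In C Lc B' HLc) in HB'c as [PB' TB'].
    assert (~ cross C B' B > 0) by tauto. assert (~ cross C B B' > 0) by tauto.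
    apply (same_direction_eq P C A B B'); auto.
    - apply (proj1 packP C HC).
    - rewrite cross_swap in *. lra.
    - nra. }
  subst B'. split; assumption.
Qed.

(** In the corona of a disc [C] of minimal radius, two mutually tangent
    neighbours [A], [B] in convex position, one of which has the radius of
    [C], are consecutive: by [no_cusp_disc] nothing fits between them. *)
Lemma corona_next_of_tangent C L A B :
  P C -> (forall D, P D -> rad C <= rad D) -> ccw_corona P C L ->
  P A -> P B -> tangent C A -> tangent C B -> tangent A B -> cross C A B > 0 ->
  rad A = rad C \/ rad B = rad C -> next_in L A B.
Proof.
  intros HC Hmin HL PA PB TA TB TAB CAB Heq.
  assert (HA : In A L) by (apply (corona_In C L A HL); auto).
  assert (HB : In B L) by (apply (corona_In C L B HL); auto).
  destruct (next_exists L A HA) as (E & HAE).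
  destruct (corona_next C L A E HC HL HAE) as [_ CAE].
  destruct (classic (E = B)) as [<-|HEB]; [exact HAE|exfalso].
  destruct (next_in_In L A E HAE) as [_ HE].
  apply (corona_In C L E HL) in HE as [PE TE].
  destruct packP as [Hpos Hdisj].
  assert (Hgap : ~ cross C B E > 0) by (pose proof (corona_gap C L A E B HL HAE CAE HB); tauto).
  assert (CEB : cross C E B > 0).
  { destruct (Rtotal_order (cross C E B) 0) as [h|[h|h]]; [| |exact h].
    - rewrite cross_swap in h. lra.
    - exfalso. apply HEB. apply (same_direction_eq P C A E B); auto. nra. }
  assert (HEA : E <> A) by (intros ->; rewrite cross_self in CAE; lra).
  destruct Heq as [HAC|HBC].
  - apply (no_cusp_disc C A B E); auto.
  - apply (no_cusp_disc_cw C B A E); auto. apply tangent_sym; auto.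
Qed.

(** Two mutually tangent discs [C1], [C2] cannot have their corona gaps on
    the same side of the segment [C1 C2] closed off by discs of different
    radii: the smaller of the two would lie inside the other's gap. *)
Lemma closing_discs_same_radius C1 C2 L1 L2 U V :
  P C1 -> P C2 -> tangent C1 C2 -> ccw_corona P C1 L1 -> ccw_corona P C2 L2 ->
  next_in L1 U C2 -> next_in L2 C1 V -> rad U = rad V.
Proof.
  intros PC1 PC2 T12 HL1 HL2 HU HV.
  destruct packP as [Hpos _].
  destruct (corona_next C1 L1 U C2 PC1 HL1 HU) as [TUC2 CU].
  destruct (corona_next C2 L2 C1 V PC2 HL2 HV) as [TC1V CV].
  destruct (next_in_corona C1 L1 U C2 HL1 HU) as [[PU T1U] _].
  destruct (next_in_corona C2 L2 C1 V HL2 HV) as [_ [PV T2V]].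
  assert (CV' : cross C1 V C2 > 0) by (rewrite cross_cyc, cross_cyc; exact CV).
  destruct (Rtotal_order (rad V) (rad U)) as [h|[h|h]]; [exfalso| exact (eq_sym h) |exfalso].
  - assert (CUV : cross C1 U V > 0).
    { apply (smaller_disc_closer C1 C2 U V); auto.
      apply tangent_sym; exact T2V. }
    apply (corona_gap C1 L1 U C2 V HL1 HU CU); [apply (corona_In C1 L1 V HL1); auto | auto].
  - assert (CUV : cross C2 U V > 0).
    { apply (smaller_disc_closer_cw C2 C1 U V); auto; try (apply tangent_sym; auto).
      rewrite cross_cyc; exact CU. }
    apply (corona_gap C2 L2 C1 V U HL2 HV CV).
    + apply (corona_In C2 L2 U HL2); split; auto. apply tangent_sym; exact TUC2.
    + split; auto. rewrite cross_cyc; exact CU.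
Qed.

End Coronas.

Definition letter_eqb (a b : Letter) : bool :=
  match a, b with L1, L1 | Lr, Lr | Ls, Ls => true | _, _ => false end.

Lemma letter_eqb_eq a b : letter_eqb a b = true <-> a = b.
Proof. destruct a, b; simpl; split; congruence. Qed.

(** A word cyclically equivalent to [w] is one of the finitely many rotations
    of [w] or of its reversal; listing them lets us check properties of all
    of them by computation. *)
Definition rotate {A} (k : nat) (v : list A) : list A := skipn k v ++ firstn k v.

Lemma rotation_rotate {A} (u v : list A) :
  rotation u v -> exists k, (k <= length v)%nat /\ u = rotate k v.
Proof.
  intros (a & b & -> & ->). exists (length b). split.
  - rewrite length_app; lia.
  - unfold rotate. f_equal.
    + induction b; simpl; auto.
    + induction b; simpl; congruence.
Qed.

Definition cyclic_variants (w : list Letter) : list (list Letter) :=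
  map (fun k => rotate k w) (seq 0 (S (length w))) ++
  map (fun k => rotate k (rev w)) (seq 0 (S (length w))).

Lemma cyc_equiv_variants v w : cyc_equiv v w -> In v (cyclic_variants w).
Proof.
  unfold cyclic_variants; intros [H|H]; apply rotation_rotate in H as (k & Hk & ->);
    apply in_or_app.
  - left. apply in_map_iff. exists k; split; [reflexivity|]. apply in_seq. lia.
  - right. apply in_map_iff. exists k; split; [reflexivity|].
    apply in_seq. rewrite length_rev in Hk. lia.
Qed.

Lemma cyc_equiv_In {A} (v w : list A) x : cyc_equiv v w -> In x v -> In x w.
Proof.
  intros [(a & b & -> & ->)|(a & b & -> & E)] Hx;
    [| apply in_rev; rewrite E]; apply in_app_iff; apply in_app_iff in Hx; tauto.
Qed.

Definition nx (n i : nat) : nat := (S i mod n)%nat.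
Definition letter_at (v : list Letter) (i : nat) : Letter := nth i v Ls.

Lemma nx_lt n i : (0 < n)%nat -> (nx n i < n)%nat.
Proof. intros; unfold nx; apply Nat.mod_upper_bound; lia. Qed.

(** [framedb v a b]: the cyclic word [v] contains a factor [x s s y], and
    every such factor has [x = a] and [y = b]. *)
Definition ss_at (v : list Letter) (i : nat) : bool :=
  let n := length v in
  letter_eqb (letter_at v (nx n i)) Ls && letter_eqb (letter_at v (nx n (nx n i))) Ls.

Definition ends_at (v : list Letter) (a b : Letter) (i : nat) : bool :=
  let n := length v in
  letter_eqb (letter_at v i) a && letter_eqb (letter_at v (nx n (nx n (nx n i)))) b.

Definition framedb (v : list Letter) (a b : Letter) : bool :=
  existsb (ss_at v) (seq 0 (length v)) &&
  forallb (fun i => implb (ss_at v i) (ends_at v a b i)) (seq 0 (length v)).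

Definition special_coding (w : list Letter) : Prop :=
  w = [L1; Lr; Ls; Ls] \/ w = [L1; L1; Lr; Ls; Ls] \/
  w = [L1; Lr; Lr; Ls; Ls] \/ w = [L1; Ls; Lr; Ls; Ls].

Lemma special_codings_framed w v :
  special_coding w -> cyc_equiv v w -> framedb v Lr L1 = true \/ framedb v L1 Lr = true.
Proof.
  intros Hw Hv.
  assert (Hall : forallb (fun u => framedb u Lr L1 || framedb u L1 Lr) (cyclic_variants w) = true)
    by (destruct Hw as [ -> | [ -> | [ -> | -> ] ] ]; vm_compute; reflexivity).
  rewrite forallb_forall in Hall.
  apply orb_true_iff, Hall, cyc_equiv_variants, Hv.
Qed.

Definition s_window (s : R) (L : list Disc) (A0 A1 A2 A3 : Disc) : Prop :=
  next_in L A0 A1 /\ next_in L A1 A2 /\ next_in L A2 A3 /\ rad A1 = s /\ rad A2 = s.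

Definition framed (s ra rb : R) (L : list Disc) : Prop :=
  (exists A0 A1 A2 A3, s_window s L A0 A1 A2 A3) /\
  (forall A0 A1 A2 A3, s_window s L A0 A1 A2 A3 -> rad A0 = ra /\ rad A3 = rb).

Lemma Forall2_nth_rel {A B} (Rel : A -> B -> Prop) l l' d d' :
  Forall2 Rel l l' -> forall i, (i < length l)%nat -> Rel (nth i l d) (nth i l' d').
Proof.
  induction 1 as [|x y l l' Hxy _ IH]; simpl; intros i Hi; [lia|].
  destruct i; [exact Hxy | apply IH; lia].
Qed.

Lemma next_position L i j A B C :
  NoDup L -> (i < length L)%nat -> (j < length L)%nat ->
  cyc_pair L i = (A, B) -> cyc_pair L j = (B, C) -> j = nx (length L) i.
Proof.
  intros Hnd Hi Hj Ei Ej. unfold cyc_pair in Ei, Ej.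
  injection Ei as _ EB. injection Ej as EB' _.
  apply (proj1 (NoDup_nth L default_disc) Hnd); [exact Hj | apply nx_lt; lia |].
  unfold nx. congruence.
Qed.

(** A corona list whose coding is framed by [a], [b] is framed by their radii;
    no repetitions in [L] make successor positions unique. *)
Lemma framed_of_word r s L v a b :
  s <> r -> s <> 1 -> NoDup L -> Forall2 (fun X l => rad X = lval r s l) L v ->
  framedb v a b = true -> framed s (lval r s a) (lval r s b) L.
Proof.
  intros Hsr Hs1 Hnd Hrad Hv.
  pose proof (Forall2_length Hrad) as Hlen.
  set (n := length L) in *.
  assert (Hat : forall i, (i < n)%nat ->
                rad (nth i L default_disc) = lval r s (letter_at v i))
    by (intros i Hi; exact (Forall2_nth_rel _ _ _ _ _ Hrad i Hi)).
  assert (Hsmall : forall l, lval r s l = s -> l = Ls)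
    by (intros [| |] Hl; simpl in Hl; congruence).
  unfold framedb in Hv. rewrite <- Hlen in Hv. apply andb_true_iff in Hv as [Hex Hall].
  rewrite forallb_forall in Hall.
  split.
  - apply existsb_exists in Hex as (i & Hi & Hss). apply in_seq in Hi.
    unfold ss_at in Hss. rewrite <- Hlen in Hss. fold n in Hss.
    apply andb_true_iff in Hss as [H1 H2]. apply letter_eqb_eq in H1, H2.
    assert (Hn : (0 < n)%nat) by lia.
    pose proof (nx_lt n i Hn). pose proof (nx_lt n (nx n i) Hn).
    exists (nth i L default_disc), (nth (nx n i) L default_disc),
      (nth (nx n (nx n i)) L default_disc), (nth (nx n (nx n (nx n i))) L default_disc).
    repeat split.
    + exists i. split; [lia | reflexivity].
    + exists (nx n i). split; [assumption | reflexivity].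
    + exists (nx n (nx n i)). split; [assumption | reflexivity].
    + rewrite Hat, H1 by assumption. reflexivity.
    + rewrite Hat, H2 by assumption. reflexivity.
  - intros A0 A1 A2 A3 ((i & Hi & E0) & (j & Hj & E1) & (k & Hk & E2) & R1 & R2).
    pose proof (next_position L i j _ _ _ Hnd Hi Hj E0 E1) as Hji.
    pose proof (next_position L j k _ _ _ Hnd Hj Hk E1 E2) as Hkj.
    fold n in Hji, Hkj. subst j k.
    unfold cyc_pair in E0, E1, E2. fold n in E0, E1, E2.
    injection E0 as <- <-. injection E1 as <-. injection E2 as <-.
    rewrite Hat in R1, R2 by assumption.
    assert (Hss : ss_at v i = true).
    { unfold ss_at. rewrite <- Hlen. fold n.
      fold (nx n i) (nx n (nx n i)) in R1, R2. rewrite (Hsmall _ R1), (Hsmall _ R2). reflexivity. }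
    assert (Hends := Hall i ltac:(apply in_seq; lia)). rewrite Hss in Hends. simpl in Hends.
    unfold ends_at in Hends. rewrite <- Hlen in Hends. fold n in Hends.
    apply andb_true_iff in Hends as [Ha Hb]. apply letter_eqb_eq in Ha, Hb.
    pose proof (nx_lt n (nx n (nx n i)) ltac:(lia)).
    split; rewrite Hat by assumption; [rewrite Ha | unfold nx in *; rewrite Hb]; reflexivity.
Qed.

Definition frame_pair (r ra rb : R) : Prop := (ra = r /\ rb = 1) \/ (ra = 1 /\ rb = r).

Section CompactPackings.

Variables (r s : R) (P : Disc -> Prop).
Hypothesis s_lt_r : s < r.
Hypothesis r_lt_1 : r < 1.
Hypothesis radii : forall D, P D -> rad D = 1 \/ rad D = r \/ rad D = s.
Hypothesis packP : packing P.
Hypothesis compactP : compact_packing P.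

Lemma s_minimal D : P D -> s <= rad D.
Proof. intros HD. destruct (radii D HD) as [h|[h|h]]; lra. Qed.

Lemma coding_framed C w :
  special_coding w -> has_coding r s P C w ->
  exists L ra rb, ccw_corona P C L /\ frame_pair r ra rb /\ framed s ra rb L.
Proof.
  intros Hw (L & v & HL & Hrad & Hv). exists L.
  assert (Hnd : NoDup L) by apply HL.
  destruct (special_codings_framed w v Hw Hv) as [Hf|Hf].
  - exists r, 1. split; [exact HL|]. split; [left; auto|].
    apply (framed_of_word r s L v Lr L1); auto; lra.
  - exists 1, r. split; [exact HL|]. split; [right; auto|].
    apply (framed_of_word r s L v L1 Lr); auto; lra.
Qed.

Lemma coding_all_s C X :
  has_coding r s P C [Ls; Ls; Ls; Ls; Ls; Ls] -> P X -> tangent C X -> rad X = s.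
Proof.
  intros (L & v & HL & Hrad & Hv) PX TX.
  assert (HX : In X L) by (apply (corona_In P C L X HL); auto).
  destruct (In_nth L X default_disc HX) as (i & Hi & <-).
  rewrite (Forall2_nth_rel _ _ _ _ Ls Hrad i Hi).
  assert (Hl : In (nth i v Ls) [Ls; Ls; Ls; Ls; Ls; Ls]).
  { apply (cyc_equiv_In v); [exact Hv|]. apply nth_In.
    rewrite <- (Forall2_length Hrad). exact Hi. }
  simpl in Hl. destruct Hl as [<-|[<-|[<-|[<-|[<-|[<-|[]]]]]]]; reflexivity.
Qed.

Lemma framed_predecessor C L a b K M Z :
  P C -> rad C = s -> ccw_corona P C L -> framed s a b L ->
  In K L -> In M L -> In Z L -> tangent K M -> tangent M Z ->
  rad K = s -> rad M = s -> cross C K M > 0 -> cross C M Z > 0 ->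
  exists U, next_in L U K /\ rad U = a /\ rad Z = b.
Proof.
  intros HC RC HL [_ Hframe] HK HM HZ TKM TMZ RK RM CKM CMZ.
  assert (Hmin : forall D, P D -> rad C <= rad D) by (intros; rewrite RC; apply s_minimal; auto).
  apply (corona_In P C L _ HL) in HK as [PK TK], HM as [PM TM], HZ as [PZ TZ].
  assert (HKM : next_in L K M) by (apply (corona_next_of_tangent P packP compactP C L); auto; lra).
  assert (HMZ : next_in L M Z) by (apply (corona_next_of_tangent P packP compactP C L); auto; lra).
  assert (HK : In K L) by (apply (corona_In P C L K HL); auto).
  destruct (prev_exists L K HK) as (U & HUK).
  exists U. split; [exact HUK|]. apply (Hframe U K M Z). repeat split; auto.
Qed.

Lemma framed_successor C L a b Z K M :
  P C -> rad C = s -> ccw_corona P C L -> framed s a b L ->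
  In Z L -> In K L -> In M L -> tangent Z K -> tangent K M ->
  rad K = s -> rad M = s -> cross C Z K > 0 -> cross C K M > 0 ->
  exists V, next_in L M V /\ rad Z = a /\ rad V = b.
Proof.
  intros HC RC HL [_ Hframe] HZ HK HM TZK TKM RK RM CZK CKM.
  assert (Hmin : forall D, P D -> rad C <= rad D) by (intros; rewrite RC; apply s_minimal; auto).
  apply (corona_In P C L _ HL) in HK as [PK TK], HM as [PM TM], HZ as [PZ TZ].
  assert (HZK : next_in L Z K) by (apply (corona_next_of_tangent P packP compactP C L); auto; lra).
  assert (HKM : next_in L K M) by (apply (corona_next_of_tangent P packP compactP C L); auto; lra).
  assert (HM : In M L) by (apply (corona_In P C L M HL); auto).
  destruct (next_exists L M HM) as (V & HMV).
  exists V. split; [exact HMV|]. apply (Hframe Z K M V). repeat split; auto.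
Qed.

(** Otherwise
    the corona of [P1] forces the disc before [Q] to have radius [rb], the
    corona of [Q] forces the disc after [P1] to have radius [ra], and these
    two discs close the same gap beyond the segment [P1 Q]. *)
Lemma window_not_both_coded w D0 L0 ra rb X P1 Q Y :
  special_coding w -> P D0 -> rad D0 = s -> ccw_corona P D0 L0 -> frame_pair r ra rb ->
  s_window s L0 X P1 Q Y -> rad X = ra -> rad Y = rb ->
  has_coding r s P P1 w -> has_coding r s P Q w -> False.
Proof.
  intros Hw HD0 RD0 HL0 Hpair (HXP1 & HP1Q & HQY & RP1 & RQ) RX RY HcP1 HcQ.
  destruct (corona_next P packP compactP D0 L0 X P1 HD0 HL0 HXP1) as [TXP1 CXP1].
  destruct (corona_next P packP compactP D0 L0 P1 Q HD0 HL0 HP1Q) as [TP1Q CP1Q].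
  destruct (corona_next P packP compactP D0 L0 Q Y HD0 HL0 HQY) as [TQY CQY].
  destruct (next_in_corona P D0 L0 X P1 HL0 HXP1) as [[PX TX] [PP1 TP1]].
  destruct (next_in_corona P D0 L0 Q Y HL0 HQY) as [[PQ TQ] [PY TY]].
  destruct (coding_framed P1 w Hw HcP1) as (L1 & a1 & b1 & HL1 & Hpair1 & Hf1).
  destruct (coding_framed Q w Hw HcQ) as (L2 & a2 & b2 & HL2 & Hpair2 & Hf2).
  assert (InL1 : forall Z, P Z -> tangent P1 Z -> In Z L1)
    by (intros; apply (corona_In P P1 L1 _ HL1); auto).
  assert (InL2 : forall Z, P Z -> tangent Q Z -> In Z L2)
    by (intros; apply (corona_In P Q L2 _ HL2); auto).
  destruct (framed_predecessor P1 L1 a1 b1 Q D0 X) as (U & HUQ & RU & RX1); auto.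
  - apply InL1; auto. apply tangent_sym; exact TP1.
  - apply InL1; auto. apply tangent_sym; exact TXP1.
  - apply tangent_sym; exact TQ.
  - rewrite cross_cyc, cross_cyc; exact CP1Q.
  - rewrite cross_cyc; exact CXP1.
  - destruct (framed_successor Q L2 a2 b2 Y D0 P1) as (V & HP1V & RY2 & RV); auto.
    + apply InL2; auto. apply tangent_sym; exact TQ.
    + apply InL2; auto. apply tangent_sym; exact TP1Q.
    + apply tangent_sym; exact TY.
    + rewrite cross_cyc, cross_cyc; exact CQY.
    + rewrite cross_cyc; exact CP1Q.
    + pose proof (closing_discs_same_radius P packP compactP P1 Q L1 L2 U V PP1 PQ TP1Q HL1 HL2
        HUQ HP1V) as Hsame.
      unfold frame_pair in *. lra.
Qed.

(** The middle discs of a window framed by [r] and [1] are [s]-discs of the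
    packing touching a disc of radius [r] or [1], so none of them has coding
    [ssssss]. *)
Lemma window_middles D0 L0 ra rb X P1 Q Y :
  P D0 -> ccw_corona P D0 L0 -> frame_pair r ra rb ->
  s_window s L0 X P1 Q Y -> rad X = ra -> rad Y = rb ->
  (P P1 /\ ~ has_coding r s P P1 [Ls; Ls; Ls; Ls; Ls; Ls]) /\
  (P Q /\ ~ has_coding r s P Q [Ls; Ls; Ls; Ls; Ls; Ls]).
Proof.
  intros HD0 HL0 Hpair (HXP1 & _ & HQY & _ & _) RX RY.
  destruct (corona_next P packP compactP D0 L0 X P1 HD0 HL0 HXP1) as [TXP1 _].
  destruct (corona_next P packP compactP D0 L0 Q Y HD0 HL0 HQY) as [TQY _].
  destruct (next_in_corona P D0 L0 X P1 HL0 HXP1) as [[PX _] [PP1 _]].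
  destruct (next_in_corona P D0 L0 Q Y HL0 HQY) as [[PQ _] [PY _]].
  unfold frame_pair in Hpair.
  split; split; auto; intros Hall.
  - pose proof (coding_all_s P1 X Hall PX (tangent_sym X P1 TXP1)). lra.
  - pose proof (coding_all_s Q Y Hall PY TQY). lra.
Qed.

End CompactPackings.

(** Around the given [s]-disc [D0] with special coding, the
    frame [r s s 1] provides two adjacent [s]-neighbours [P1], [Q], each
    tangent to a disc of radius [r] or [1], so neither has coding [ssssss];
    by [window_not_both_coded] one of them has a coding different from [w].
    (Positivity of [s] is already implied by [packing P].) *)
Theorem lemma4 (r s : R) (P : Disc -> Prop) (w : list Letter) :
  0 < s -> s < r -> r < 1 ->
  (forall D : Disc, P D -> rad D = 1 \/ rad D = r \/ rad D = s) ->
  packing P -> compact_packing P ->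
  (w = [L1; Lr; Ls; Ls] \/ w = [L1; L1; Lr; Ls; Ls] \/
   w = [L1; Lr; Lr; Ls; Ls] \/ w = [L1; Ls; Lr; Ls; Ls]) ->
  (exists D : Disc, P D /\ rad D = s /\ has_coding r s P D w) ->
  exists D : Disc, P D /\ rad D = s /\ ~ has_coding r s P D w /\
    ~ has_coding r s P D [Ls; Ls; Ls; Ls; Ls; Ls].
Proof.
  intros _ Hsr Hr1 Hradii HP HPc Hw (D0 & HD0 & RD0 & Hcode0).
  destruct (coding_framed r s P Hsr Hr1 D0 w Hw Hcode0)
    as (L0 & ra & rb & HL0 & Hpair & (X & P1 & Q & Y & Hwin) & Hframe).
  destruct (Hframe X P1 Q Y Hwin) as [RX RY].
  destruct (window_middles r s P Hsr Hr1 HP HPc D0 L0 ra rb X P1 Q Y HD0 HL0 Hpair Hwin RX RY)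
    as [[PP1 HsP1] [PQ HsQ]].
  pose proof Hwin as (_ & _ & _ & RP1 & RQ).
  destruct (classic (has_coding r s P P1 w)) as [HcP1|HcP1];
    [destruct (classic (has_coding r s P Q w)) as [HcQ|HcQ]|].
  - exfalso. exact (window_not_both_coded r s P Hsr Hr1 Hradii HP HPc w D0 L0 ra rb
      X P1 Q Y Hw HD0 RD0 HL0 Hpair Hwin RX RY HcP1 HcQ).
  - exists Q. auto.
  - exists P1. auto.
Qed.
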